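(* Let $\mathscr{C}=\left\{\sum_{i=1}^{\infty} t_i 3^{-i} : t_i\in\{0,2\}\right\}$ be the middle-third Cantor set, and for an integer $m\geq 1$ let $\mathscr{C}^{(m)}=\{x^m : x\in\mathscr{C}\}$. Let $t_m=2\cdot\left\lceil \left(\tfrac{3}{2}\right)^{m-1}\right\rceil$. Then the $t_m$-fold sumset \[\underbrace{\mathscr{C}^{(m)}+\mathscr{C}^{(m)}+\cdots+\mathscr{C}^{(m)}}_{t_m\text{ times}}=\{y_1+\cdots+y_{t_m} : y_j\in\mathscr{C}^{(m)}\}\] contains the interval \[I=\left[(m+1)\left(\tfrac{2}{3}\right)^{m}+(m-1),\ (m-1)\left(\tfrac{2}{3}\right)^{m}+(m+1)\right],\] which has Lebesgue measure $2\left(1-\left(\tfrac{2}{3}\right)^{m}\right)$. *)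

From Stdlib Require Import Reals List ZArith.
Open Scope R_scope.

(* The middle-third Cantor set: x = sum_{i>=1} t_i 3^{-i}, t_i in {0,2}.
   Here digit d i corresponds to t_{i+1}. *)
Definition cantor (x : R) : Prop :=
  exists d : nat -> R,
    (forall i, d i = 0 \/ d i = 2) /\
    Un_cv (fun n => sum_f_R0 (fun i => d i / 3 ^ (S i)) n) x.

Definition cantor_pow (m : nat) (y : R) : Prop :=
  exists x, cantor x /\ y = x ^ m.

Definition sumset (k : nat) (S : R -> Prop) (z : R) : Prop :=
  exists ys : list R, length ys = k /\ Forall S ys /\ fold_right Rplus 0 ys = z.

Definition ceilR (x : R) : Z := (- Int_part (- x))%Z.

Definition t_m (m : nat) : nat := 2 * Z.to_nat (ceilR ((3/2) ^ (m - 1))).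

From Stdlib Require Import Reals List ZArith Lra Lia Psatz Classical.
From Stdlib Require Import ChoiceFacts IndefiniteDescription.
Open Scope R_scope.

(* Choose the ternary digits of the n summands level by level, starting from
   the cell [2/3, 1] for each.  At a level where every cell has width w, giving
   the right third to the first p summands and the left third to the others
   yields n + 1 candidate ranges for the sum of m-th powers.  Consecutive ranges
   overlap: moving one summand from its left to its right third shifts the sum by
   at most m w/3, while each of the other n - 1 summands leaves a slack of at
   least m (w/3) (2/3)^(m-1).  Hence if (n - 1) (2/3)^(m-1) >= 1, a point of the
   initial range [n (2/3)^m, n] stays in the range at every level, and the limit
   Cantor points have m-th powers summing to it.  For n = t_m this condition holds
   and the interval I lies in [n (2/3)^m, n]. *)

Lemma pow_sub_pow_ge (m : nat) (b e : R) :
  0 <= b -> 0 <= e -> INR (S m) * e * b ^ m <= (b + e) ^ S m - b ^ S m.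
Proof.
  intros Hb He; induction m as [|m IH]; [simpl; lra|].
  rewrite S_INR; cbn [pow] in *.
  assert (0 <= b ^ m) by (apply pow_le; lra).
  assert (0 <= INR (S m)) by apply pos_INR.
  assert (e * (INR (S m) * e * b ^ m) >= 0) by (apply Rle_ge; repeat apply Rmult_le_pos; lra).
  nra.
Qed.

Lemma pow_sub_pow_le (m : nat) (b e : R) :
  0 <= b -> 0 <= e -> b + e <= 1 -> (b + e) ^ m - b ^ m <= INR m * e.
Proof.
  intros Hb He Hbe; induction m as [|m IH]; [simpl; lra|].
  rewrite S_INR; cbn [pow].
  assert (b ^ m <= (b + e) ^ m) by (apply pow_incr; lra).
  assert ((b + e) ^ m <= 1) by (rewrite <- (pow1 m); apply pow_incr; lra).
  assert (0 <= b ^ m) by (apply pow_le; lra).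
  nra.
Qed.

Lemma sum_f_R0_ge_except (g : nat -> R) (c : R) (N p : nat) :
  (p <= N)%nat -> (forall j, (j <= N)%nat -> j <> p -> c <= g j) ->
  INR N * c + g p <= sum_f_R0 g N.
Proof.
  revert p; induction N as [|N IH]; intros p Hp Hg.
  - replace p with 0%nat by lia; simpl; lra.
  - rewrite S_INR; cbn [sum_f_R0].
    destruct (Nat.eq_dec p (S N)) as [->|Hne].
    + assert (Hle : sum_f_R0 (fun _ => c) N <= sum_f_R0 g N)
        by (apply sum_Rle; intros; apply Hg; lia).
      rewrite sum_cte, S_INR in Hle; lra.
    + assert (INR N * c + g p <= sum_f_R0 g N) by (apply IH; [lia | intros; apply Hg; lia]).
      assert (c <= g (S N)) by (apply Hg; lia).
      lra.
Qed.

Lemma overlapping_chain_covers (lo hi : nat -> R) (n : nat) (z : R) :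
  lo 0%nat <= z -> z <= hi n -> (forall p, (p < n)%nat -> lo (S p) <= hi p) ->
  exists p, lo p <= z <= hi p.
Proof.
  intros Hlo; induction n as [|n IH]; intros Hhi Hov; [exists 0%nat; lra|].
  destruct (Rle_dec (lo (S n)) z) as [Hle|Hgt]; [exists (S n); lra|].
  apply IH; [|intros; apply Hov; lia].
  assert (lo (S n) <= hi n) by (apply Hov; lia); lra.
Qed.

Definition thr_digit (p j : nat) : R := if (j <? p)%nat then 2 else 0.

Section Refinement.

Variables (m N : nat) (c : nat -> R) (w : R).
Hypothesis enough_summands : 1 <= INR N * (2/3) ^ m.
Hypothesis w_ge0 : 0 <= w.
Hypothesis c_cell : forall j, 2/3 <= c j /\ c j + w <= 1.

Let lo p := sum_f_R0 (fun j => (c j + thr_digit p j * (w / 3)) ^ S m) N.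
Let hi p := sum_f_R0 (fun j => (c j + thr_digit p j * (w / 3) + w / 3) ^ S m) N.

Lemma thr_ranges_overlap (p : nat) : (p <= N)%nat -> lo (S p) <= hi p.
Proof.
  intros Hp.
  set (g := fun j => (c j + thr_digit p j * (w / 3) + w / 3) ^ S m
                     - (c j + thr_digit (S p) j * (w / 3)) ^ S m).
  set (inc := INR (S m) * (w / 3) * (2/3) ^ m).
  assert (Hother : forall j, (j <= N)%nat -> j <> p -> inc <= g j).
  { intros j _ Hjp; unfold g.
    replace (thr_digit (S p) j) with (thr_digit p j)
      by (unfold thr_digit; destruct (Nat.ltb_spec j p), (Nat.ltb_spec j (S p)); lia || lra).
    set (b := c j + thr_digit p j * (w / 3)).
    assert (Hb : 2/3 <= b) by (unfold b, thr_digit; destruct (c_cell j), (Nat.ltb_spec j p); lra).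
    apply Rle_trans with (INR (S m) * (w / 3) * b ^ m); [|apply pow_sub_pow_ge; lra].
    apply Rmult_le_compat_l; [apply Rmult_le_pos; [apply pos_INR | lra]|].
    apply pow_incr; lra. }
  assert (Hself : - (INR (S m) * (w / 3)) <= g p).
  { unfold g, thr_digit; rewrite Nat.ltb_irrefl.
    destruct (Nat.ltb_spec p (S p)); [|lia].
    replace (c p + 2 * (w / 3)) with (c p + 0 * (w / 3) + w / 3 + w / 3) by ring.
    destruct (c_cell p).
    assert (Hb : 0 <= c p + 0 * (w / 3) + w / 3) by lra.
    pose proof (pow_sub_pow_le (S m) _ (w / 3) Hb ltac:(lra) ltac:(lra)); lra. }
  assert (Hsum : INR N * inc + g p <= sum_f_R0 g N)
    by (apply sum_f_R0_ge_except; [exact Hp | exact Hother]).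
  assert (Hdiff : sum_f_R0 g N = hi p - lo (S p)) by apply minus_sum.
  assert (0 <= INR (S m) * (w / 3) * (INR N * (2/3) ^ m - 1))
    by (apply Rmult_le_pos; [apply Rmult_le_pos; [apply pos_INR | lra] | lra]).
  unfold inc in Hsum; nra.
Qed.

Lemma refine_step (z : R) :
  sum_f_R0 (fun j => c j ^ S m) N <= z <= sum_f_R0 (fun j => (c j + w) ^ S m) N ->
  exists p, lo p <= z <= hi p.
Proof.
  intros [Hlo Hhi]; apply (overlapping_chain_covers lo hi (S N)).
  - unfold lo; rewrite (sum_eq _ (fun j => c j ^ S m)); [exact Hlo|].
    intros j _; replace (thr_digit 0 j) with 0 by reflexivity; f_equal; ring.
  - unfold hi; rewrite (sum_eq _ (fun j => (c j + w) ^ S m)); [exact Hhi|].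
    intros j Hj; unfold thr_digit.
    destruct (Nat.ltb_spec j (S N)); [|lia]; f_equal; field.
  - intros p Hp; apply thr_ranges_overlap; lia.
Qed.

End Refinement.

(* A list l of thresholds, most recent first, fixes for every summand j a ternary
   cell of depth length l + 1: its first digit is 2 and the digit chosen with
   threshold p is thr_digit p j. *)
Fixpoint cell_left (j : nat) (l : list nat) : R :=
  match l with
  | nil => 2/3
  | p :: l' => cell_left j l' + thr_digit p j / 3 ^ S (S (length l'))
  end.

Definition cell_width (l : list nat) : R := / 3 ^ S (length l).

Lemma cell_left_bounds (j : nat) (l : list nat) :
  2/3 <= cell_left j l /\ cell_left j l + cell_width l <= 1.
Proof.
  unfold cell_width; induction l as [|p l IH]; cbn [cell_left length].
  - simpl; lra.
  - assert (Hpos : 0 < / 3 ^ S (S (length l))) by (apply Rinv_0_lt_compat, pow_lt; lra).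
    assert (Hw : / 3 ^ S (length l) = 3 * / 3 ^ S (S (length l)))
      by (cbn [pow]; field; apply pow_nonzero; lra).
    unfold Rdiv, thr_digit; destruct (Nat.ltb_spec j p); lra.
Qed.

Definition cells_bracket (m N : nat) (z : R) (l : list nat) : Prop :=
  sum_f_R0 (fun j => cell_left j l ^ m) N <= z <=
  sum_f_R0 (fun j => (cell_left j l + cell_width l) ^ m) N.

Lemma cells_bracket_refine (m N : nat) (z : R) (l : list nat) :
  1 <= INR N * (2/3) ^ m -> cells_bracket (S m) N z l ->
  exists p, cells_bracket (S m) N z (p :: l).
Proof.
  intros HN Hz.
  assert (Hw : forall p, cell_width (p :: l) = cell_width l / 3)
    by (intros; unfold cell_width; cbn [length pow]; field; apply pow_nonzero; lra).
  assert (Hleft : forall p j, cell_left j (p :: l) = cell_left j l + thr_digit p j * (cell_width l / 3))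
    by (intros p j; rewrite <- (Hw p); unfold cell_width; reflexivity).
  assert (Hw0 : 0 <= cell_width l) by (left; apply Rinv_0_lt_compat, pow_lt; lra).
  destruct (refine_step m N (fun j => cell_left j l) (cell_width l) HN Hw0
              (fun j => cell_left_bounds j l) z Hz) as [p Hp].
  exists p; unfold cells_bracket; rewrite Hw.
  rewrite (sum_eq _ _ _ (fun j _ => f_equal (fun x => x ^ S m) (Hleft p j))).
  rewrite (sum_eq _ _ _ (fun j _ => f_equal (fun x => (x + cell_width l / 3) ^ S m) (Hleft p j))).
  exact Hp.
Qed.

Lemma cantor_series_bounds (d : nat -> R) :
  (forall i, d i = 0 \/ d i = 2) ->
  exists x, Un_cv (fun n => sum_f_R0 (fun i => d i / 3 ^ S i) n) x /\
    forall k, sum_f_R0 (fun i => d i / 3 ^ S i) k <= x <=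
              sum_f_R0 (fun i => d i / 3 ^ S i) k + / 3 ^ S k.
Proof.
  intros Hd.
  set (s := fun n => sum_f_R0 (fun i => d i / 3 ^ S i) n).
  set (t := fun n => s n + / 3 ^ S n).
  assert (Hstep : forall n, s n <= s (S n) /\ t (S n) <= t n).
  { intros n; unfold t, s; cbn [sum_f_R0].
    assert (0 < / 3 ^ S (S n)) by (apply Rinv_0_lt_compat, pow_lt; lra).
    assert (/ 3 ^ S n = 3 * / 3 ^ S (S n)) by (cbn [pow]; field; apply pow_nonzero; lra).
    unfold Rdiv; destruct (Hd (S n)) as [-> | ->]; lra. }
  assert (Hs : Un_growing s) by (intro n; apply Hstep).
  assert (Ht : Un_decreasing t) by (intro n; apply Hstep).
  assert (Hst : forall n k, s n <= t k).
  { intros n k.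
    assert (0 < / 3 ^ S (max n k)) by (apply Rinv_0_lt_compat, pow_lt; lra).
    pose proof (growing_prop s (max n k) n Hs ltac:(lia)).
    pose proof (decreasing_prop t k (max n k) Ht ltac:(lia)).
    unfold t in *; lra. }
  assert (Hub : has_ub s) by (exists (t 0%nat); intros y [n ->]; apply Hst).
  destruct (growing_cv s Hs Hub) as [x Hx].
  exists x; split; [exact Hx|]; intros k; split.
  - exact (growing_ineq s x Hs Hx k).
  - apply (Rle_cv_lim (Un := s) (Vn := fun _ => t k)); [intro n; apply Hst | exact Hx |].
    intros eps Heps; exists 0%nat; intros; unfold Rdist; rewrite Rminus_diag, Rabs_R0; exact Heps.
Qed.

Lemma eq_of_dist_le_geometric (a b C : R) :
  (forall k, Rabs (a - b) <= C * / 3 ^ k) -> a = b.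
Proof.
  intros H; destruct (Req_dec a b) as [|Hne]; [assumption | exfalso].
  assert (Hd : 0 < Rabs (a - b)) by (apply Rabs_pos_lt; lra).
  assert (HC : 0 < C) by (specialize (H 0%nat); simpl in H; lra).
  destruct (pow_lt_1_zero (/ 3) ltac:(rewrite Rabs_pos_eq; lra) (Rabs (a - b) / C))
    as [k Hk]; [apply Rdiv_lt_0_compat; assumption|].
  specialize (Hk k (le_n k)); specialize (H k).
  rewrite Rabs_pos_eq, pow_inv in Hk by (apply pow_le; lra).
  apply (Rmult_lt_compat_l C) in Hk; [|exact HC].
  replace (C * (Rabs (a - b) / C)) with (Rabs (a - b)) in Hk by (field; lra).
  lra.
Qed.

Lemma fold_right_Rplus_map_seq (f : nat -> R) (N : nat) (a : R) :
  fold_right Rplus a (map f (seq 0 (S N))) = sum_f_R0 f N + a.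
Proof.
  revert a; induction N as [|N IH]; intros a; [simpl; ring|].
  rewrite seq_S, map_app, fold_right_app, IH; simpl; ring.
Qed.

Section CellChain.

Variable f : nat -> list nat.
Hypothesis f_0 : f 0%nat = nil.
Hypothesis f_S : forall k, exists p, f (S k) = p :: f k.

Lemma length_cell_chain (k : nat) : length (f k) = k.
Proof.
  induction k as [|k IH]; [rewrite f_0; reflexivity|].
  destruct (f_S k) as [p ->]; simpl; rewrite IH; reflexivity.
Qed.

Lemma cantor_points_in_cells :
  exists x : nat -> R, forall j, cantor (x j) /\
    forall k, cell_left j (f k) <= x j <= cell_left j (f k) + cell_width (f k).
Proof.
  set (d := fun j i => match i with O => 2 | S k => thr_digit (hd 0%nat (f (S k))) j end).
  assert (Hd : forall j i, d j i = 0 \/ d j i = 2).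
  { intros j [|i]; [right; reflexivity|]; unfold d, thr_digit; destruct (_ <? _)%nat; auto. }
  assert (Hpart : forall j k, sum_f_R0 (fun i => d j i / 3 ^ S i) k = cell_left j (f k)).
  { intros j k; induction k as [|k IH]; [rewrite f_0; simpl; field|].
    destruct (f_S k) as [p Hk]; cbn [sum_f_R0]; rewrite IH.
    unfold d; rewrite Hk; cbn [cell_left hd]; rewrite length_cell_chain; reflexivity. }
  destruct (functional_choice _ (fun j => cantor_series_bounds (d j) (Hd j))) as [x Hx].
  exists x; intros j; split; [exists (d j); split; [apply Hd | apply Hx]|].
  intros k; rewrite <- Hpart; unfold cell_width; rewrite length_cell_chain; apply Hx.
Qed.

Lemma cells_bracket_chain_sum (m N : nat) (z : R) (x : nat -> R) :
  (forall k, cells_bracket (S m) N z (f k)) ->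
  (forall j k, cell_left j (f k) <= x j <= cell_left j (f k) + cell_width (f k)) ->
  z = sum_f_R0 (fun j => x j ^ S m) N.
Proof.
  intros Hz Hx.
  apply (eq_of_dist_le_geometric _ _ (INR (S N) * INR (S m) / 3)); intros k.
  destruct (Hz k) as [Hlo Hhi].
  set (a := fun j => cell_left j (f k)); set (w := cell_width (f k)).
  assert (Hw : 0 < w) by (apply Rinv_0_lt_compat, pow_lt; lra).
  assert (Hpow : forall j, a j ^ S m <= x j ^ S m <= (a j + w) ^ S m).
  { intros j; pose proof (cell_left_bounds j (f k)); specialize (Hx j k).
    split; apply pow_incr; unfold a, w in *; lra. }
  assert (Hx_lo : sum_f_R0 (fun j => a j ^ S m) N <= sum_f_R0 (fun j => x j ^ S m) N)
    by (apply sum_Rle; intros j _; apply Hpow).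
  assert (Hx_hi : sum_f_R0 (fun j => x j ^ S m) N <= sum_f_R0 (fun j => (a j + w) ^ S m) N)
    by (apply sum_Rle; intros j _; apply Hpow).
  assert (Hwidth : sum_f_R0 (fun j => (a j + w) ^ S m) N - sum_f_R0 (fun j => a j ^ S m) N
                   <= INR (S N) * INR (S m) / 3 * / 3 ^ k).
  { rewrite <- minus_sum.
    replace (INR (S N) * INR (S m) / 3 * / 3 ^ k) with (INR (S m) * w * INR (S N))
      by (unfold w, cell_width; rewrite length_cell_chain; cbn [pow]; field;
          apply pow_nonzero; lra).
    rewrite <- sum_cte; apply sum_Rle; intros j _.
    pose proof (cell_left_bounds j (f k)); apply pow_sub_pow_le; unfold a, w in *; lra. }
  apply Rabs_le; split; unfold a, w in *; lra.
Qed.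

End CellChain.

Lemma sumset_cantor_pow_contains (m n : nat) (z : R) :
  1 <= (INR n - 1) * (2/3) ^ m -> INR n * (2/3) ^ S m <= z <= INR n ->
  sumset n (cantor_pow (S m)) z.
Proof.
  intros Hn Hz.
  destruct n as [|N]; [pose proof (pow_le (2/3) m); simpl in Hn; lra|].
  replace (INR (S N) - 1) with (INR N) in Hn by (rewrite S_INR; ring).
  set (B := cells_bracket (S m) N z).
  assert (Hstart : B nil).
  { unfold B, cells_bracket, cell_width; cbn [cell_left length].
    rewrite !sum_cte, Rmult_comm; replace (2/3 + / 3 ^ 1) with 1 by (simpl; field).
    rewrite pow1; lra. }
  destruct (functional_choice_imp_functional_dependent_choice functional_choice
              (fun l l' : list nat => exists p, l' = p :: l /\ (B l -> B l')))
    with (x0 := @nil nat) as [f [Hf0 Hf]].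
  { intros l; destruct (classic (B l)) as [Hl|Hl].
    - destruct (cells_bracket_refine m N z l Hn Hl) as [p Hp]; exists (p :: l), p; auto.
    - exists (0%nat :: l), 0%nat; split; [reflexivity | contradiction]. }
  assert (Hf_S : forall k, exists p, f (S k) = p :: f k)
    by (intros k; destruct (Hf k) as [p [Hp _]]; exists p; exact Hp).
  assert (HB : forall k, B (f k)).
  { induction k as [|k IH]; [rewrite Hf0; exact Hstart|].
    destruct (Hf k) as [p [_ Himp]]; auto. }
  destruct (cantor_points_in_cells f Hf0 Hf_S) as [x Hx].
  exists (map (fun j => x j ^ S m) (seq 0 (S N))); split; [|split].
  - rewrite length_map, length_seq; reflexivity.
  - apply Forall_forall; intros y Hy; apply in_map_iff in Hy; destruct Hy as [j [<- _]].
    exists (x j); split; [apply Hx | reflexivity].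
  - rewrite fold_right_Rplus_map_seq, Rplus_0_r; symmetry.
    apply (cells_bracket_chain_sum f Hf0 Hf_S m N z x HB); intros j; apply Hx.
Qed.

Lemma ceilR_bounds (x : R) : x <= IZR (ceilR x) < x + 1.
Proof. unfold ceilR; rewrite opp_IZR; destruct (base_Int_part (- x)); lra. Qed.

Lemma t_m_succ (m : nat) :
  exists c : nat, t_m (S m) = (2 * c)%nat /\ (3/2) ^ m <= INR c < (3/2) ^ m + 1.
Proof.
  unfold t_m; replace (S m - 1)%nat with m by lia.
  exists (Z.to_nat (ceilR ((3/2) ^ m))); split; [reflexivity|].
  assert (1 <= (3/2) ^ m) by (apply pow_R1_Rle; lra).
  destruct (ceilR_bounds ((3/2) ^ m)).
  rewrite INR_IZR_INZ, Z2Nat.id; [lra|].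
  apply le_IZR; lra.
Qed.

Lemma pow_3_2_ge_quadratic (k : nat) : 1 + INR k / 2 + INR k * (INR k - 1) / 8 <= (3/2) ^ k.
Proof.
  induction k as [|k IH]; [simpl; lra|].
  rewrite S_INR; cbn [pow].
  assert (0 <= INR k * (INR k - 1)).
  { destruct k; [simpl; lra|]. rewrite S_INR; pose proof (pos_INR k); nra. }
  pose proof (pos_INR k); nra.
Qed.

Lemma pow_3_2_gt (k : nat) : INR k < (3/2) ^ k.
Proof.
  pose proof (pow_3_2_ge_quadratic k).
  pose proof (Rle_0_sqr (INR k - 5/2)); unfold Rsqr in *; nra.
Qed.

Lemma pow_3_2_mul_pow_2_3 (m : nat) : (3/2) ^ m * (2/3) ^ m = 1.
Proof. rewrite <- Rpow_mult_distr; replace (3/2 * (2/3)) with 1 by field; apply pow1. Qed.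

Lemma t_m_summands_enough (m : nat) (c : R) :
  (3/2) ^ m <= c -> 1 <= (2 * c - 1) * (2/3) ^ m.
Proof.
  intros Hc.
  pose proof (pow_3_2_mul_pow_2_3 m) as Hr.
  assert (1 <= (3/2) ^ m) by (apply pow_R1_Rle; lra).
  assert (0 < (2/3) ^ m) by (apply pow_lt; lra).
  nra.
Qed.

Lemma interval_within_sumset_range (m c : nat) :
  (3/2) ^ m <= INR c < (3/2) ^ m + 1 ->
  2 * INR c * (2/3) ^ S m <= (INR m + 2) * (2/3) ^ S m + INR m /\
  INR m * (2/3) ^ S m + (INR m + 2) <= 2 * INR c.
Proof.
  intros Hc.
  assert (Hmc : INR m + 1 <= INR c).
  { rewrite <- S_INR; apply le_INR, INR_lt. pose proof (pow_3_2_gt m); lra. }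
  pose proof (pow_3_2_mul_pow_2_3 m) as Hr.
  assert (Hr0 : 0 < (2/3) ^ m) by (apply pow_lt; lra).
  assert (Hr1 : (2/3) ^ m <= 1) by (rewrite <- (pow1 m); apply pow_incr; lra).
  cbn [pow]; split.
  2:{ pose proof (Rmult_le_pos (INR m) (1 - 2/3 * (2/3) ^ m) (pos_INR m) ltac:(lra)); lra. }
  destruct m as [|[|m]].
  - assert (INR c = 1); [|simpl in *; lra].
    simpl in Hc; replace c with 1%nat; [reflexivity|].
    assert (c < 2)%nat by (apply INR_lt; simpl; lra).
    assert (1 <= c)%nat by (apply INR_le; simpl; lra). lia.
  - simpl in *; nra.
  - rewrite !S_INR in *; pose proof (pos_INR m); nra.
Qed.

Theorem theorem3 (m : nat) (hm : (1 <= m)%nat) :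
  (forall z : R,
     INR (m + 1) * (2/3) ^ m + INR (m - 1) <= z <=
     INR (m - 1) * (2/3) ^ m + INR (m + 1) ->
     sumset (t_m m) (cantor_pow m) z) /\
  (INR (m - 1) * (2/3) ^ m + INR (m + 1)) - (INR (m + 1) * (2/3) ^ m + INR (m - 1))
    = 2 * (1 - (2/3) ^ m).
Proof.
  destruct m as [|m]; [lia|].
  replace (S m - 1)%nat with m by lia.
  replace (INR (S m + 1)) with (INR m + 2) by (rewrite plus_INR, S_INR; simpl; ring).
  split; [|ring].
  intros z Hz.
  destruct (t_m_succ m) as [c [Ht Hc]].
  destruct (interval_within_sumset_range m c Hc) as [Hlo Hhi].
  rewrite Ht; apply sumset_cantor_pow_contains; rewrite mult_INR; simpl (INR 2).
  - apply t_m_summands_enough; lra.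
  - lra.
Qed.
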